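(* Let $\mathcal K$ be a 2-category which admits Eilenberg–Moore constructions for monads and in which idempotent 2-cells split, and let $J^w:\mathrm{EM}^w(\mathcal K)\to\mathcal K$ be the pseudo-functor described in the context. Let $l$ be a 0-cell, $(t,\mu,\eta)$ a monad on $k$, and $(s,\psi):t\to t$ a 1-cell of $\mathrm{EM}^w(\mathcal K)$. There is a bijective correspondence between (i) pairs $(V,\zeta)$ of a 1-cell $V:l\to J^w(t)$ and a 2-cell $\zeta:J^w(s,\psi)V\Rightarrow V$ in $\mathcal K$; and (ii) pairs $((W,\varrho),\lambda)$ of a 1-cell $(W,\varrho):I(l)\to t$ of $\mathrm{EM}(\mathcal K)$ (i.e. $W:l\to k$, $\varrho:tW\Rightarrow W$ with $\varrho\ast t\varrho=\varrho\ast\mu W$, $\varrho\ast\eta W=W$) and a 2-cell $\lambda:(s,\psi)\circ(W,\varrho)\Rightarrow(W,\varrho)$ of $\mathrm{EM}^w(\mathcal K)$, where $(W,\varrho)$ is regarded as a 1-cell of $\mathrm{EM}^w(\mathcal K)$.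
   Context: Conventions in a 2-category $\mathcal K$: horizontal composition and whiskering by juxtaposition in the order of functor composition; identity 1-cell of $k$ written $k$, identity 2-cell of $V$ written $V$; vertical composition $\ast$ with $\alpha\ast\beta$ meaning $\beta$ then $\alpha$. A monad $(t,\mu,\eta)$ on $k$: associative and unital $\mu:tt\Rightarrow t$, $\eta:k\Rightarrow t$. $I(l)$ is the identity monad $(l,l,l)$ on $l$. $\mathrm{EM}^w(\mathcal K)$: 0-cells monads; 1-cells $(V,\psi):(t,\mu,\eta)\to(t',\mu',\eta')$ with $V:k\to k'$, $\psi:t'V\Rightarrow Vt$, $V\mu\ast\psi t\ast t'\psi=\psi\ast\mu'V$; 2-cells $(V,\psi)\Rightarrow(W,\phi)$ are $\varrho:V\Rightarrow Wt$ with $W\mu\ast\varrho t\ast\psi=W\mu\ast\phi t\ast t'\varrho$ and $\varrho=W\mu\ast\phi t\ast\eta'Wt\ast\varrho$; 1-cell composite $(V',\psi')\circ(V,\psi)=(V'V,V'\psi\ast\psi'V)$. $\mathrm{EM}(\mathcal K)$ is the sub-2-category whose 1-cells additionally satisfy $\psi\ast\eta'V=V\eta$, with all $\mathrm{EM}^w$-2-cells between them. Thus a 2-cell $\lambda:(s,\psi)\circ(W,\varrho)\Rightarrow(W,\varrho)$ is a 2-cell $\lambda:sW\Rightarrow W$ of $\mathcal K$ with $\varrho\ast t\lambda=\lambda\ast s\varrho\ast\psi W$. $\mathcal K$ admits Eilenberg–Moore constructions for monads: the inclusion $I:\mathcal K\to\mathrm{EM}(\mathcal K)$ has a right 2-adjoint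 $J$; each monad $(t,\mu,\eta)$ gives an adjunction $f\dashv v$, $v:J(t)\to k$, unit $\eta$, counit $\epsilon$, $t=vf$, $\mu=v\epsilon f$; for each $l$, $X\mapsto(vX,v\epsilon X)$, $\omega\mapsto v\omega$ is an isomorphism between $\mathcal K(l,J(t))$ and the category of $t$-algebras $(A:l\to k,\alpha:tA\Rightarrow A)$ (morphisms $\rho$ with $\beta\ast t\rho=\rho\ast\alpha$). Idempotent 2-cells split. The pseudo-functor $J^w$: for every 1-cell $(V,\psi):t\to t'$ of $\mathrm{EM}^w(\mathcal K)$ a splitting $Vv\overset{\pi}{\Rightarrow}\widetilde V\overset{\iota}{\Rightarrow}Vv$ of the idempotent $Vv\epsilon\ast\psi v\ast\eta'Vv$ is fixed; $J^w(t)=J(t)$; $J^w(V,\psi):J(t)\to J(t')$ is the unique 1-cell with $v'J^w(V,\psi)=\widetilde V$ and $v'\epsilon'J^w(V,\psi)=\pi\ast Vv\epsilon\ast\psi v\ast t'\iota$; for a 2-cell $\varrho:(V,\psi)\Rightarrow(W,\phi)$, $J^w(\varrho)$ is the unique 2-cell with $v'J^w(\varrho)=\pi\ast Wv\epsilon\ast\varrho v\ast\iota$. This is a pseudo-functor $\mathrm{EM}^w(\mathcal K)\to\mathcal K$. *)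

(** A strict 2-category.  2-cells between 0-cells a and b form a single type
    [C a b], each 2-cell having a source [s2] and a target [t2] 1-cell.
    Composition operations are total, and the laws are stated under the
    appropriate composability conditions.  This avoids dependent transports. *)
Record TwoCat := {
  Ob : Type;
  Hom : Ob -> Ob -> Type;
  C : Ob -> Ob -> Type;
  s2 : forall {a b} , C a b -> Hom a b;
  t2 : forall {a b} , C a b -> Hom a b;
  id1 : forall a, Hom a a;
  comp1 : forall {a b c} , Hom b c -> Hom a b -> Hom a c;
  id2 : forall {a b} , Hom a b -> C a b;
  vc : forall {a b} , C a b -> C a b -> C a b;              (* vc al be = al * be : be then al *)
  hc : forall {a b c} , C b c -> C a b -> C a c;
  comp1A : forall {a b c d} (h : Hom c d) (g : Hom b c) (f : Hom a b),
      comp1 h (comp1 g f) = comp1 (comp1 h g) f;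
  comp1_id1l : forall {a b} (f : Hom a b), comp1 (id1 b) f = f;
  comp1_id1r : forall {a b} (f : Hom a b), comp1 f (id1 a) = f;
  s2_id2 : forall {a b} (f : Hom a b), s2 (id2 f) = f;
  t2_id2 : forall {a b} (f : Hom a b), t2 (id2 f) = f;
  s2_vc : forall {a b} (al be : C a b), s2 al = t2 be -> s2 (vc al be) = s2 be;
  t2_vc : forall {a b} (al be : C a b), s2 al = t2 be -> t2 (vc al be) = t2 al;
  s2_hc : forall {a b c} (al : C b c) (be : C a b), s2 (hc al be) = comp1 (s2 al) (s2 be);
  t2_hc : forall {a b c} (al : C b c) (be : C a b), t2 (hc al be) = comp1 (t2 al) (t2 be);
  vcA : forall {a b} (al be ga : C a b), s2 al = t2 be -> s2 be = t2 ga ->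
      vc al (vc be ga) = vc (vc al be) ga;
  vc_id2l : forall {a b} (al : C a b), vc (id2 (t2 al)) al = al;
  vc_id2r : forall {a b} (al : C a b), vc al (id2 (s2 al)) = al;
  hcA : forall {a b c d} (al : C c d) (be : C b c) (ga : C a b),
      hc al (hc be ga) = hc (hc al be) ga;
  hc_id2l : forall {a b} (al : C a b), hc (id2 (id1 b)) al = al;
  hc_id2r : forall {a b} (al : C a b), hc al (id2 (id1 a)) = al;
  hc_id2 : forall {a b c} (g : Hom b c) (f : Hom a b), hc (id2 g) (id2 f) = id2 (comp1 g f);
  interchange : forall {a b c} (al al' : C b c) (be be' : C a b),
      s2 al = t2 al' -> s2 be = t2 be' ->
      hc (vc al al') (vc be be') = vc (hc al be) (hc al' be')
}.

Arguments Hom : clear implicits.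
Arguments C : clear implicits.
Arguments s2 {_ _ _}.
Arguments t2 {_ _ _}.
Arguments id1 {_}.
Arguments comp1 {_ _ _ _}.
Arguments id2 {_ _ _}.
Arguments vc {_ _ _}.
Arguments hc {_ _ _ _}.

Section Defs.
Variable K : TwoCat.

Definition cell2 {a b} (al : C K a b) (f g : Hom K a b) : Prop :=
  s2 al = f /\ t2 al = g.

(** whiskerings: [wl V al] is "V al", [wr al V] is "al V". *)
Definition wl {a b c} (V : Hom K b c) (al : C K a b) : C K a c := hc (id2 V) al.
Definition wr {a b c} (al : C K b c) (V : Hom K a b) : C K a c := hc al (id2 V).

Definition is_monad {k} (t : Hom K k k) (mu eta : C K k k) : Prop :=
  cell2 mu (comp1 t t) t /\ cell2 eta (id1 k) t /\
  vc mu (wl t mu) = vc mu (wr mu t) /\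
  vc mu (wl t eta) = id2 t /\
  vc mu (wr eta t) = id2 t.

Definition is_alg {l k} (t : Hom K k k) (mu eta : C K k k)
    (A : Hom K l k) (alpha : C K l k) : Prop :=
  cell2 alpha (comp1 t A) A /\
  vc alpha (wl t alpha) = vc alpha (wr mu A) /\
  vc alpha (wr eta A) = id2 A.

(** Eilenberg-Moore object data (J, v, f, eps) for the monad (t, mu, eta) on k:
    adjunction f -| v with unit eta and counit eps, t = v f, mu = v eps f, and
    for every l the comparison X |-> (vX, v eps X), omega |-> v omega is an
    isomorphism of K(l, J) with the category of t-algebras. *)
Definition EM_data {k} (t : Hom K k k) (mu eta : C K k k)
    (J : Ob K) (v : Hom K J k) (f : Hom K k J) (eps : C K J J) : Prop :=
  cell2 eps (comp1 f v) (id1 J) /\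
  comp1 v f = t /\
  mu = wr (wl v eps) f /\
  vc (wl v eps) (wr eta v) = id2 v /\
  vc (wr eps f) (wl f eta) = id2 f /\
  (forall l (A : Hom K l k) (alpha : C K l k), is_alg t mu eta A alpha ->
     exists! X : Hom K l J, comp1 v X = A /\ wr (wl v eps) X = alpha) /\
  (forall l (X Y : Hom K l J) (rho : C K l k),
     cell2 rho (comp1 v X) (comp1 v Y) ->
     vc (wr (wl v eps) Y) (wl t rho) = vc rho (wr (wl v eps) X) ->
     exists! om : C K l J, cell2 om X Y /\ wl v om = rho).

Definition admits_EM : Prop :=
  forall k (t : Hom K k k) (mu eta : C K k k), is_monad t mu eta ->
  exists (J : Ob K) (v : Hom K J k) (f : Hom K k J) (eps : C K J J),
    EM_data t mu eta J v f eps.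

Definition idempotents_split : Prop :=
  forall a b (f : Hom K a b) (e : C K a b), cell2 e f f -> vc e e = e ->
  exists (g : Hom K a b) (p i : C K a b),
    cell2 p f g /\ cell2 i g f /\ vc p i = id2 g /\ vc i p = e.

Definition EMw_1cell {k k'} (t : Hom K k k) (mu : C K k k)
    (t' : Hom K k' k') (mu' : C K k' k') (V : Hom K k k') (psi : C K k k') : Prop :=
  cell2 psi (comp1 t' V) (comp1 V t) /\
  vc (wl V mu) (vc (wr psi t) (wl t' psi)) = vc psi (wr mu' V).

Definition EM_1cell {k k'} (t : Hom K k k) (mu eta : C K k k)
    (t' : Hom K k' k') (mu' eta' : C K k' k') (V : Hom K k k') (psi : C K k k') : Prop :=
  EMw_1cell t mu t' mu' V psi /\ vc psi (wr eta' V) = wl V eta.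

Definition EMw_2cell {k k'} (t : Hom K k k) (mu : C K k k)
    (t' : Hom K k' k') (eta' : C K k' k')
    (V : Hom K k k') (psi : C K k k') (W : Hom K k k') (phi : C K k k')
    (rho : C K k k') : Prop :=
  cell2 rho V (comp1 W t) /\
  vc (wl W mu) (vc (wr rho t) psi) = vc (wl W mu) (vc (wr phi t) (wl t' rho)) /\
  rho = vc (wl W mu) (vc (wr phi t) (vc (wr eta' (comp1 W t)) rho)).

(** 1-cell composite (V', psi') o (V, psi) = (V'V, V'psi * psi'V). *)
Definition EMw_comp_cell {k k' k''} (V' : Hom K k' k'') (psi' : C K k' k'')
    (V : Hom K k k') (psi : C K k k') : C K k k'' :=
  vc (wl V' psi) (wr psi' V).

Definition Imon_t (l : Ob K) : Hom K l l := id1 l.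
Definition Imon_mu (l : Ob K) : C K l l := id2 (id1 l).
Definition Imon_eta (l : Ob K) : C K l l := id2 (id1 l).

End Defs.

Arguments cell2 {K a b}.
Arguments wl {K a b c}.
Arguments wr {K a b c}.
Arguments is_monad {K k}.
Arguments is_alg {K l k}.
Arguments EM_data {K k}.
Arguments EMw_1cell {K k k'}.
Arguments EM_1cell {K k k'}.
Arguments EMw_2cell {K k k'}.
Arguments EMw_comp_cell {K k k' k''}.
Arguments Imon_t {K}.
Arguments Imon_mu {K}.
Arguments Imon_eta {K}.

From Stdlib Require Import ClassicalEpsilon ProofIrrelevance.

(* For a t-algebra (A, a), the 2-cell s a * psi A is an associative action of t
   on s A, and e_A := s a * psi A * eta s A is idempotent.  For the algebra
   (vV, v eps V) this idempotent is (iota pi) V, so s~ V = v J^w(s, psi) V is its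
   image, and a 2-cell zeta : J^w(s, psi) V => V is the same as a t-algebra map
   v zeta : s~ V => v V.  Pre- and post-composing with iota V and pi V identifies
   such maps with the maps lambda : s v V => v V compatible with the twisted
   action, which are exactly the EM^w 2-cells of (ii).  Since every EM 1-cell
   I(l) -> t is a t-algebra, hence of the form (vV, v eps V) for a unique V, the
   two sides correspond bijectively. *)

Section Whiskering.
Variable K : TwoCat.
Implicit Types a b c d : Ob K.

Lemma vc_id2l_eq a b (x : C K a b) g : t2 x = g -> vc (id2 g) x = x.
Proof. intros <-; apply vc_id2l. Qed.

Lemma vc_id2r_eq a b (x : C K a b) g : s2 x = g -> vc x (id2 g) = x.
Proof. intros <-; apply vc_id2r. Qed.

Lemma vc_id2_id2 a b (g : Hom K a b) : vc (id2 g) (id2 g) = id2 g.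
Proof. apply vc_id2l_eq, t2_id2. Qed.

Lemma wl_vc a b c (V : Hom K b c) (x y : C K a b) : s2 x = t2 y ->
  wl V (vc x y) = vc (wl V x) (wl V y).
Proof.
  intros Hxy; unfold wl; rewrite <- (vc_id2_id2 _ _ V) at 1.
  apply interchange; [rewrite s2_id2, t2_id2|]; auto.
Qed.

Lemma wr_vc a b c (V : Hom K a b) (x y : C K b c) : s2 x = t2 y ->
  wr (vc x y) V = vc (wr x V) (wr y V).
Proof.
  intros Hxy; unfold wr; rewrite <- (vc_id2_id2 _ _ V) at 1.
  apply interchange; [|rewrite s2_id2, t2_id2]; auto.
Qed.

Lemma wl_comp1 a b c d (V : Hom K c d) (W : Hom K b c) (x : C K a b) :
  wl (comp1 V W) x = wl V (wl W x).
Proof. unfold wl; rewrite hcA, hc_id2; reflexivity. Qed.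

Lemma wr_comp1 a b c d (x : C K c d) (V : Hom K b c) (W : Hom K a b) :
  wr x (comp1 V W) = wr (wr x V) W.
Proof. unfold wr; rewrite <- hcA, hc_id2; reflexivity. Qed.

Lemma wl_wr a b c d (V : Hom K c d) (x : C K b c) (W : Hom K a b) :
  wl V (wr x W) = wr (wl V x) W.
Proof. apply hcA. Qed.

Lemma wl_id1 a b (x : C K a b) : wl (id1 b) x = x.
Proof. apply hc_id2l. Qed.

Lemma wr_id1 a b (x : C K a b) : wr x (id1 a) = x.
Proof. apply hc_id2r. Qed.

Lemma wl_id2 a b c (V : Hom K b c) (g : Hom K a b) : wl V (id2 g) = id2 (comp1 V g).
Proof. apply hc_id2. Qed.

Lemma wr_id2 a b c (V : Hom K a b) (g : Hom K b c) : wr (id2 g) V = id2 (comp1 g V).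
Proof. apply hc_id2. Qed.

(* Both sides equal the horizontal composite [hc x y]. *)
Lemma whisker_exchange a b c (x : C K b c) (y : C K a b) f g f' g' :
  s2 x = f -> t2 x = g -> s2 y = f' -> t2 y = g' ->
  vc (wr x g') (wl f y) = vc (wl g y) (wr x f').
Proof.
  intros Hxs Hxt Hys Hyt; unfold wl, wr; transitivity (hc x y).
  - rewrite <- interchange by (rewrite ?s2_id2, ?t2_id2; auto).
    rewrite vc_id2r_eq, vc_id2l_eq; auto.
  - rewrite <- interchange by (rewrite ?s2_id2, ?t2_id2; auto).
    rewrite vc_id2r_eq, vc_id2l_eq; auto.
Qed.

Lemma vcA_rewrite a b (x y z r : C K a b) : vc x y = z -> s2 x = t2 y -> s2 y = t2 r ->
  vc x (vc y r) = vc z r.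
Proof. intros <- Hxy Hyr; apply vcA; auto. Qed.

End Whiskering.

(* Source/target bookkeeping: compute both sides of an equation between 1-cells
   from the typing hypotheses in context and normalize composites of 1-cells. *)
Create HintDb cells.
#[export] Hint Rewrite comp1A comp1_id1l comp1_id1r : cells.

Ltac cells := unfold wl, wr, EMw_comp_cell; repeat cells_step;
  autorewrite with cells; reflexivity
with cells_step := first
 [ rewrite s2_hc | rewrite t2_hc | rewrite s2_id2 | rewrite t2_id2
 | rewrite s2_vc by cells | rewrite t2_vc by cells
 | match goal with H : s2 ?a = _ |- context [s2 ?a] => rewrite H end
 | match goal with H : t2 ?a = _ |- context [t2 ?a] => rewrite H end ].

Ltac vc_assoc_right := repeat (rewrite <- vcA by cells).

Section MonadAlgebras.
Variable K : TwoCat.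
Variables (k : Ob K) (t : Hom K k k) (mu eta : C K k k).
Hypothesis Hmon : is_monad t mu eta.
Let Hmu_s : s2 mu = comp1 t t := proj1 (proj1 Hmon).
Let Hmu_t : t2 mu = t := proj2 (proj1 Hmon).
Let Heta_s : s2 eta = id1 k := proj1 (proj1 (proj2 Hmon)).
Let Heta_t : t2 eta = t := proj2 (proj1 (proj2 Hmon)).
Let Hmu_eta_l : vc mu (wl t eta) = id2 t := proj1 (proj2 (proj2 (proj2 Hmon))).
Let Hmu_eta_r : vc mu (wr eta t) = id2 t := proj2 (proj2 (proj2 (proj2 Hmon))).
Variables (s : Hom K k k) (psi : C K k k).
Hypothesis Hs : EMw_1cell t mu t mu s psi.
Let Hpsi_s : s2 psi = comp1 t s := proj1 (proj1 Hs).
Let Hpsi_t : t2 psi = comp1 s t := proj2 (proj1 Hs).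
Let Hpsi : vc (wl s mu) (vc (wr psi t) (wl t psi)) = vc psi (wr mu s) := proj2 Hs.

Section Algebra.
Variables (l : Ob K) (A : Hom K l k) (al : C K l k).
Hypothesis Halg : is_alg t mu eta A al.
Let Hal_s : s2 al = comp1 t A := proj1 (proj1 Halg).
Let Hal_t : t2 al = A := proj2 (proj1 Halg).
Let Hal_assoc : vc al (wl t al) = vc al (wr mu A) := proj1 (proj2 Halg).
Let Hal_unit : vc al (wr eta A) = id2 A := proj2 (proj2 Halg).

Lemma is_alg_wr l' (V : Hom K l' l) : is_alg t mu eta (comp1 A V) (wr al V).
Proof.
  split; [split; cells|split].
  - rewrite wl_wr, wr_comp1, <- !wr_vc by cells. rewrite Hal_assoc; reflexivity.
  - rewrite wr_comp1, <- wr_vc by cells. rewrite Hal_unit, wr_id2; reflexivity.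
Qed.

Local Notation twisted := (vc (wl s al) (wr psi A)).
Local Notation idem := (vc twisted (wr eta (comp1 s A))).

Lemma twisted_assoc : vc twisted (wl t twisted) = vc twisted (wr mu (comp1 s A)).
Proof.
  rewrite wl_vc by cells. vc_assoc_right.
  assert (Hnat : vc (wr psi A) (wl t (wl s al))
               = vc (wl s (wl t al)) (wr (wr psi t) A)).
  { rewrite <- !wl_comp1, <- wr_comp1. apply whisker_exchange; auto. }
  rewrite (vcA_rewrite _ _ _ _ _ _ _ Hnat) by cells. vc_assoc_right.
  assert (Hassoc : vc (wl s al) (wl s (wl t al)) = vc (wl s al) (wl s (wr mu A))).
  { rewrite <- !wl_vc by cells. rewrite Hal_assoc; reflexivity. }
  rewrite (vcA_rewrite _ _ _ _ _ _ _ Hassoc) by cells. vc_assoc_right.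
  assert (Hpsi_A : vc (wl s (wr mu A)) (vc (wr (wr psi t) A) (wl t (wr psi A)))
                 = vc (wr psi A) (wr (wr mu s) A)).
  { rewrite !wl_wr, <- !wr_vc by cells. rewrite Hpsi; reflexivity. }
  rewrite Hpsi_A, wr_comp1; reflexivity.
Qed.

Lemma twisted_t_idem : vc twisted (wl t idem) = twisted.
Proof.
  rewrite wl_vc, vcA, twisted_assoc, <- vcA by cells.
  rewrite wl_wr, !wr_comp1, <- !wr_vc by cells. rewrite Hmu_eta_l, !wr_id2.
  apply vc_id2r_eq; cells.
Qed.

Lemma idem_twisted : vc idem twisted = twisted.
Proof.
  rewrite <- vcA by cells.
  assert (Hnat := whisker_exchange _ _ _ _ eta twisted (id1 k) t
                    (comp1 t (comp1 s A)) (comp1 s A) Heta_s Heta_t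
                    ltac:(cells) ltac:(cells)).
  rewrite wl_id1 in Hnat. rewrite Hnat, vcA, twisted_assoc, <- vcA by cells.
  rewrite !wr_comp1, <- !wr_vc by cells. rewrite Hmu_eta_r, !wr_id2.
  apply vc_id2r_eq; cells.
Qed.

Lemma twisted_morphism_idem (lam : C K l k) : s2 lam = comp1 s A -> t2 lam = A ->
  vc lam twisted = vc al (wl t lam) -> vc lam idem = lam.
Proof.
  intros Hlam_s Hlam_t Hlam. rewrite vcA, Hlam by cells. vc_assoc_right.
  assert (Hnat := whisker_exchange _ _ _ _ eta lam (id1 k) t (comp1 s A) A
                    Heta_s Heta_t Hlam_s Hlam_t).
  rewrite wl_id1 in Hnat. rewrite <- Hnat, vcA, Hal_unit by cells.
  apply vc_id2l_eq; auto.
Qed.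

End Algebra.

Lemma EM_1cell_Imon_iff l (W : Hom K l k) (rho : C K l k) :
  EM_1cell (Imon_t l) (Imon_mu l) (Imon_eta l) t mu eta W rho <-> is_alg t mu eta W rho.
Proof.
  unfold EM_1cell, EMw_1cell, Imon_t, Imon_mu, Imon_eta, is_alg, cell2.
  rewrite wl_id2, wr_id1, !comp1_id1r. split.
  - intros [[[HW_s HW_t] Hassoc] Hunit]. rewrite vc_id2l_eq in Hassoc by cells. auto.
  - intros [[HW_s HW_t] [Hassoc Hunit]]. rewrite vc_id2l_eq by cells. auto.
Qed.

Lemma EMw_2cell_Imon_iff l (W : Hom K l k) (rho lam : C K l k) : is_alg t mu eta W rho ->
  EMw_2cell (Imon_t l) (Imon_mu l) t eta
    (comp1 s W) (EMw_comp_cell s psi W rho) W rho lam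
  <-> cell2 lam (comp1 s W) W /\ vc lam (vc (wl s rho) (wr psi W)) = vc rho (wl t lam).
Proof.
  intros [[Hrho_s Hrho_t] [Hassoc Hunit]].
  unfold EMw_2cell, EMw_comp_cell, Imon_t, Imon_mu, Imon_eta, cell2.
  rewrite wl_id2, !wr_id1, !comp1_id1r. split.
  - intros [[Hlam_s Hlam_t] [Hlam _]]. rewrite !vc_id2l_eq in Hlam by cells. auto.
  - intros [[Hlam_s Hlam_t] Hlam]. rewrite !vc_id2l_eq by cells. repeat split; auto.
    rewrite vcA, Hunit by cells. symmetry; apply vc_id2l_eq; auto.
Qed.

End MonadAlgebras.

Section Lifting.
Variable K : TwoCat.
Variables (l k : Ob K) (t : Hom K k k) (mu eta : C K k k).
Hypothesis Hmon : is_monad t mu eta.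
Let Heta_s : s2 eta = id1 k := proj1 (proj1 (proj2 Hmon)).
Let Heta_t : t2 eta = t := proj2 (proj1 (proj2 Hmon)).
Variables (J : Ob K) (v : Hom K J k) (f : Hom K k J) (eps : C K J J).
Hypothesis HEM : EM_data t mu eta J v f eps.
Let Heps_s : s2 eps = comp1 f v := proj1 (proj1 HEM).
Let Heps_t : t2 eps = id1 J := proj2 (proj1 HEM).
Let Hvf : comp1 v f = t := proj1 (proj2 HEM).
Let Hmu_def : mu = wr (wl v eps) f := proj1 (proj2 (proj2 HEM)).
Let Hunit_v : vc (wl v eps) (wr eta v) = id2 v := proj1 (proj2 (proj2 (proj2 HEM))).
Let Hlift_alg : forall l' (A : Hom K l' k) (alpha : C K l' k), is_alg t mu eta A alpha ->
    exists! X : Hom K l' J, comp1 v X = A /\ wr (wl v eps) X = alpha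
  := proj1 (proj2 (proj2 (proj2 (proj2 (proj2 HEM))))).
Let Hlift_map : forall l' (X Y : Hom K l' J) (rho : C K l' k),
    cell2 rho (comp1 v X) (comp1 v Y) ->
    vc (wr (wl v eps) Y) (wl t rho) = vc rho (wr (wl v eps) X) ->
    exists! om : C K l' J, cell2 om X Y /\ wl v om = rho
  := proj2 (proj2 (proj2 (proj2 (proj2 (proj2 HEM))))).
Variables (s : Hom K k k) (psi : C K k k).
Hypothesis Hs : EMw_1cell t mu t mu s psi.
Let Hpsi_s : s2 psi = comp1 t s := proj1 (proj1 Hs).
Let Hpsi_t : t2 psi = comp1 s t := proj2 (proj1 Hs).
Variables (sv : Hom K J k) (pi iota : C K J k).
Hypotheses (Hpi : cell2 pi (comp1 s v) sv) (Hiota : cell2 iota sv (comp1 s v))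
  (Hpi_iota : vc pi iota = id2 sv)
  (Hiota_pi : vc iota pi =
              vc (wl s (wl v eps)) (vc (wr psi v) (wr eta (comp1 s v)))).
Let Hpi_s : s2 pi = comp1 s v := proj1 Hpi.
Let Hpi_t : t2 pi = sv := proj2 Hpi.
Let Hiota_s : s2 iota = sv := proj1 Hiota.
Let Hiota_t : t2 iota = comp1 s v := proj2 Hiota.
Variable (Js : Hom K J J).
Hypotheses (HJs_v : comp1 v Js = sv)
  (HJs_eps : wr (wl v eps) Js =
             vc pi (vc (wl s (wl v eps)) (vc (wr psi v) (wl t iota)))).

Lemma comp1_vf a (X : Hom K k a) : comp1 (comp1 X v) f = comp1 X t.
Proof. rewrite <- comp1A, Hvf; reflexivity. Qed.

Lemma comp1_vJs a (X : Hom K k a) : comp1 (comp1 X v) Js = comp1 X sv.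
Proof. rewrite <- comp1A, HJs_v; reflexivity. Qed.

Local Hint Rewrite Hvf comp1_vf HJs_v comp1_vJs : cells.

Lemma is_alg_veps : is_alg t mu eta v (wl v eps).
Proof.
  split; [split; cells | split; [|exact Hunit_v]].
  assert (Hnat := whisker_exchange _ _ _ _ eps eps (comp1 f v) (id1 J) (comp1 f v) (id1 J)
                    Heps_s Heps_t Heps_s Heps_t).
  rewrite wr_id1, wl_id1 in Hnat.
  replace (wl t (wl v eps)) with (wl v (wl (comp1 f v) eps))
    by (rewrite <- Hvf, !wl_comp1; reflexivity).
  rewrite <- wl_vc, Hnat, wl_vc by cells.
  rewrite Hmu_def, <- wr_comp1, <- wl_wr; reflexivity.
Qed.

Lemma is_alg_wr_veps l' (V : Hom K l' J) : is_alg t mu eta (comp1 v V) (wr (wl v eps) V).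
Proof. exact (is_alg_wr _ _ _ _ _ Hmon _ _ _ is_alg_veps _ V). Qed.

Lemma veps_natural l' (X Y : Hom K l' J) (z : C K l' J) : cell2 z X Y ->
  vc (wr (wl v eps) Y) (wl t (wl v z)) = vc (wl v z) (wr (wl v eps) X).
Proof.
  intros [Hz_s Hz_t].
  replace (wl t (wl v z)) with (wl v (wl (comp1 f v) z))
    by (rewrite <- Hvf, !wl_comp1; reflexivity).
  rewrite <- !wl_wr, <- !wl_vc by cells.
  rewrite (whisker_exchange _ _ _ _ eps z (comp1 f v) (id1 J) X Y), wl_id1; auto.
Qed.

Lemma wr_iota_pi l' (V : Hom K l' J) : wr (vc iota pi) V =
  vc (vc (wl s (wr (wl v eps) V)) (wr psi (comp1 v V))) (wr eta (comp1 s (comp1 v V))).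
Proof.
  rewrite Hiota_pi, !wr_vc, <- vcA by cells.
  rewrite <- wl_wr, <- !wr_comp1, comp1A; reflexivity.
Qed.

Lemma wr_veps_Js l' (V : Hom K l' J) : wr (wl v eps) (comp1 Js V) =
  vc (wr pi V) (vc (vc (wl s (wr (wl v eps) V)) (wr psi (comp1 v V))) (wl t (wr iota V))).
Proof.
  rewrite wr_comp1, HJs_eps, !wr_vc by cells. rewrite <- (vcA _ (wl s _)) by cells.
  rewrite <- !wr_comp1, !wl_wr; reflexivity.
Qed.

Lemma twisted_morphism_of_Js_action (V : Hom K l J) (z : C K l J) :
  cell2 z (comp1 Js V) V ->
  vc (vc (wl v z) (wr pi V)) (vc (wl s (wr (wl v eps) V)) (wr psi (comp1 v V)))
  = vc (wr (wl v eps) V) (wl t (vc (wl v z) (wr pi V))).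
Proof.
  intros Hz; pose proof Hz as [Hz_s Hz_t].
  rewrite wl_vc, (vcA _ (wr (wl v eps) V)) by cells.
  rewrite (veps_natural _ _ _ _ Hz), wr_veps_Js. vc_assoc_right.
  rewrite <- (wl_vc _ _ _ _ t (wr iota V)), <- wr_vc, wr_iota_pi by cells.
  rewrite (vcA _ (wl s (wr (wl v eps) V))) by cells.
  rewrite (twisted_t_idem _ _ _ _ _ Hmon _ _ Hs _ _ _ (is_alg_wr_veps _ V)); reflexivity.
Qed.

Lemma alg_morphism_of_twisted_morphism (V : Hom K l J) (lam : C K l k) :
  cell2 lam (comp1 s (comp1 v V)) (comp1 v V) ->
  vc lam (vc (wl s (wr (wl v eps) V)) (wr psi (comp1 v V)))
    = vc (wr (wl v eps) V) (wl t lam) ->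
  vc (wr (wl v eps) V) (wl t (vc lam (wr iota V)))
    = vc (vc lam (wr iota V)) (wr (wl v eps) (comp1 Js V)).
Proof.
  intros [Hlam_s Hlam_t] Hlam.
  rewrite wl_vc, (vcA _ (wr (wl v eps) V)), <- Hlam by cells.
  rewrite wr_veps_Js. vc_assoc_right.
  assert (Hsplit : vc (wr iota V) (wr pi V) = wr (vc iota pi) V)
    by (rewrite wr_vc by cells; reflexivity).
  rewrite (vcA_rewrite _ _ _ _ _ _ _ Hsplit) by cells.
  rewrite wr_iota_pi, (vcA _ (wl s (wr (wl v eps) V))) by cells.
  rewrite (vcA_rewrite _ _ _ _ _ _ _
             (idem_twisted _ _ _ _ _ Hmon _ _ Hs _ _ _ (is_alg_wr_veps _ V))) by cells.
  vc_assoc_right; reflexivity.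
Qed.

Definition Js_actions : Type :=
  {V : Hom K l J & {zeta : C K l J | cell2 zeta (comp1 Js V) V}}.

Definition EMw_actions : Type :=
  {W : Hom K l k & {rho : C K l k & {lam : C K l k |
     EM_1cell (Imon_t l) (Imon_mu l) (Imon_eta l) t mu eta W rho /\
     EMw_2cell (Imon_t l) (Imon_mu l) t eta
       (comp1 s W) (EMw_comp_cell s psi W rho) W rho lam}}}.

Lemma EMw_action_of_Js_action_spec (V : Hom K l J) (z : C K l J) :
  cell2 z (comp1 Js V) V ->
  EM_1cell (Imon_t l) (Imon_mu l) (Imon_eta l) t mu eta (comp1 v V) (wr (wl v eps) V) /\
  EMw_2cell (Imon_t l) (Imon_mu l) t eta
    (comp1 s (comp1 v V)) (EMw_comp_cell s psi (comp1 v V) (wr (wl v eps) V))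
    (comp1 v V) (wr (wl v eps) V) (vc (wl v z) (wr pi V)).
Proof.
  intros Hz; pose proof Hz as [Hz_s Hz_t]. split.
  - apply EM_1cell_Imon_iff, is_alg_wr_veps.
  - apply (EMw_2cell_Imon_iff _ _ _ _ _ Hmon _ _ Hs); [apply is_alg_wr_veps|].
    split; [split; cells | apply twisted_morphism_of_Js_action; exact Hz].
Qed.

Definition EMw_action_of_Js_action (x : Js_actions) : EMw_actions :=
  existT _ (comp1 v (projT1 x)) (existT _ (wr (wl v eps) (projT1 x))
    (exist _ (vc (wl v (proj1_sig (projT2 x))) (wr pi (projT1 x)))
       (EMw_action_of_Js_action_spec _ _ (proj2_sig (projT2 x))))).

(* An EM 1-cell I(l) -> t is a t-algebra, hence (vV, v eps V) for a unique V;
   then lam iota V is a t-algebra map and lifts uniquely to zeta. *)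
Lemma Js_action_of_EMw_action_spec (y : EMw_actions) :
  {x : Js_actions | comp1 v (projT1 x) = projT1 y /\
     wr (wl v eps) (projT1 x) = projT1 (projT2 y) /\
     wl v (proj1_sig (projT2 x)) = vc (proj1_sig (projT2 (projT2 y))) (wr iota (projT1 x))}.
Proof.
  destruct y as [W [rho [lam [Hrho Hlam]]]]; simpl.
  apply EM_1cell_Imon_iff in Hrho.
  apply (EMw_2cell_Imon_iff _ _ _ _ _ Hmon _ _ Hs _ _ _ _ Hrho) in Hlam.
  assert (HV : exists V, comp1 v V = W /\ wr (wl v eps) V = rho)
    by (destruct (Hlift_alg _ _ _ Hrho) as [V [HV _]]; eauto).
  apply constructive_indefinite_description in HV. destruct HV as [V [<- <-]].
  destruct Hlam as [[Hlam_s Hlam_t] Hlam].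
  assert (Hz : exists z, cell2 z (comp1 Js V) V /\ wl v z = vc lam (wr iota V)).
  { destruct (Hlift_map _ (comp1 Js V) V (vc lam (wr iota V))) as [z [Hz _]].
    - split; cells.
    - apply alg_morphism_of_twisted_morphism; [split|]; auto.
    - eauto. }
  apply constructive_indefinite_description in Hz. destruct Hz as [z [Hz Hvz]].
  exists (existT _ V (exist _ z Hz)); simpl; auto.
Qed.

Definition Js_action_of_EMw_action (y : EMw_actions) : Js_actions :=
  proj1_sig (Js_action_of_EMw_action_spec y).

Lemma EMw_action_of_Js_actionK (x : Js_actions) :
  Js_action_of_EMw_action (EMw_action_of_Js_action x) = x.
Proof.
  destruct x as [V [z Hz]]. unfold Js_action_of_EMw_action.
  destruct (Js_action_of_EMw_action_spec _) as [[V' [z' Hz']] [HvV [HepsV Hvz]]].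
  simpl in *.
  assert (V' = V) as ->.
  { destruct (Hlift_alg _ _ _ (is_alg_wr_veps _ V)) as [X [_ Huniq]].
    transitivity X; [symmetry|]; apply Huniq; auto. }
  pose proof Hz as [Hz_s Hz_t]. pose proof Hz' as [Hz'_s Hz'_t].
  assert (Hvz' : wl v z' = wl v z).
  { rewrite Hvz, <- vcA, <- wr_vc by cells. rewrite Hpi_iota, wr_id2.
    apply vc_id2r_eq; cells. }
  assert (z' = z) as ->.
  { destruct (Hlift_map _ (comp1 Js V) V (wl v z)) as [z0 [_ Huniq]].
    - split; cells.
    - apply veps_natural; exact Hz.
    - transitivity z0; [symmetry|]; apply Huniq; auto. }
  do 2 f_equal; apply proof_irrelevance.
Qed.

Lemma Js_action_of_EMw_actionK (y : EMw_actions) :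
  EMw_action_of_Js_action (Js_action_of_EMw_action y) = y.
Proof.
  destruct y as [W [rho [lam Hy]]]. unfold Js_action_of_EMw_action.
  destruct (Js_action_of_EMw_action_spec _) as [[V [z Hz]] [HW [Hrho_eq Hvz]]].
  unfold EMw_action_of_Js_action; simpl in *. subst W rho.
  pose proof Hy as [Hrho Hlam]. apply EM_1cell_Imon_iff in Hrho.
  apply (EMw_2cell_Imon_iff _ _ _ _ _ Hmon _ _ Hs _ _ _ _ Hrho) in Hlam.
  pose proof Hrho as [[Hrho_s Hrho_t] [Hassoc Hunit]].
  destruct Hlam as [[Hlam_s Hlam_t] Hlam]. pose proof Hz as [Hz_s Hz_t].
  assert (Hlam_eq : vc (wl v z) (wr pi V) = lam).
  { rewrite Hvz, <- vcA, <- wr_vc, wr_iota_pi by cells.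
    apply (twisted_morphism_idem _ _ _ _ _ Hmon _ _ Hs _ _ _ Hrho); auto. }
  generalize (EMw_action_of_Js_action_spec V z Hz); rewrite Hlam_eq; intro Hy'.
  rewrite (proof_irrelevance _ Hy' Hy); reflexivity.
Qed.

End Lifting.

Theorem lemma3p6
  (K : TwoCat) (HEM : admits_EM K) (Hsplit : idempotents_split K)
  (l k : Ob K) (t : Hom K k k) (mu eta : C K k k) (Hmon : is_monad t mu eta)
  (* J^w(t) = J(t), with its Eilenberg-Moore data *)
  (J : Ob K) (v : Hom K J k) (f : Hom K k J) (eps : C K J J)
  (HJ : EM_data t mu eta J v f eps)
  (* the 1-cell (s, psi) : t -> t of EM^w(K) *)
  (s : Hom K k k) (psi : C K k k) (Hs : EMw_1cell t mu t mu s psi)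
  (* the fixed splitting  s v ==pi==> s~ ==iota==> s v  of the idempotent
     s v eps * psi v * eta s v *)
  (sv : Hom K J k) (pi iota : C K J k)
  (Hpi : cell2 pi (comp1 s v) sv) (Hiota : cell2 iota sv (comp1 s v))
  (Hpiiota : vc pi iota = id2 sv)
  (Hiotapi : vc iota pi =
             vc (wl s (wl v eps)) (vc (wr psi v) (wr eta (comp1 s v))))
  (* Js = J^w(s, psi) : J -> J *)
  (Js : Hom K J J)
  (HJs1 : comp1 v Js = sv)
  (HJs2 : wr (wl v eps) Js =
          vc pi (vc (wl s (wl v eps)) (vc (wr psi v) (wl t iota)))) :
  exists (F : {V : Hom K l J & {zeta : C K l J | cell2 zeta (comp1 Js V) V}} ->
              {W : Hom K l k & {rho : C K l k & {lam : C K l k |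
                 EM_1cell (Imon_t l) (Imon_mu l) (Imon_eta l) t mu eta W rho /\
                 EMw_2cell (Imon_t l) (Imon_mu l) t eta
                   (comp1 s W) (EMw_comp_cell s psi W rho) W rho lam}}})
         (G : {W : Hom K l k & {rho : C K l k & {lam : C K l k |
                 EM_1cell (Imon_t l) (Imon_mu l) (Imon_eta l) t mu eta W rho /\
                 EMw_2cell (Imon_t l) (Imon_mu l) t eta
                   (comp1 s W) (EMw_comp_cell s psi W rho) W rho lam}}} ->
              {V : Hom K l J & {zeta : C K l J | cell2 zeta (comp1 Js V) V}}),
    (forall x, G (F x) = x) /\ (forall y, F (G y) = y).
Proof.
  exists (EMw_action_of_Js_action K l k t mu eta Hmon J v f eps HJ s psi Hs
            sv pi iota Hpi Hiota Hiotapi Js HJs1 HJs2),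
         (Js_action_of_EMw_action K l k t mu eta Hmon J v f eps HJ s psi Hs
            sv pi iota Hpi Hiota Hiotapi Js HJs1 HJs2).
  split.
  - apply EMw_action_of_Js_actionK; assumption.
  - apply Js_action_of_EMw_actionK.
Qed.
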